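(* Let $a\in C\ell_{1,2}$. Then there is a unique $x\in C\ell_{1,2}$ satisfying $axa=a$, $xax=x$, $(ax)'=ax$ and $(xa)'=xa$.
   Context: $C\ell_{1,2}$ is the real Clifford algebra generated by $i_1,i_2,i_3$ with $i_1^2=1$, $i_2^2=i_3^2=-1$ and $i_ti_m=-i_mi_t$ for $t\neq m$, with real basis $e_0=1$, $e_1=i_1$, $e_2=i_2$, $e_3=i_1i_2$, $e_4=i_3$, $e_5=i_1i_3$, $e_6=i_2i_3$, $e_7=i_1i_2i_3$. For $a=\sum_{t=0}^7 a_te_t$ the prime is $a'=a_0+a_1e_1-a_2e_2+a_3e_3-a_4e_4+a_5e_5-a_6e_6-a_7e_7$. *)

From Stdlib Require Import Reals List Arith.
Import ListNotations.
Open Scope R_scope.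

(* An element a = sum_{t=0}^7 a_t e_t, with basis
   e0=1, e1=i1, e2=i2, e3=i1 i2, e4=i3, e5=i1 i3, e6=i2 i3, e7=i1 i2 i3.
   Index t read in binary: bit 0 <-> i1, bit 1 <-> i2, bit 2 <-> i3,
   and e_t is the product of the corresponding generators in increasing order. *)
Record Cl12 := mkCl12 {
  c0 : R; c1 : R; c2 : R; c3 : R; c4 : R; c5 : R; c6 : R; c7 : R }.

Definition coef (a : Cl12) (t : nat) : R :=
  match t with
  | 0 => c0 a | 1 => c1 a | 2 => c2 a | 3 => c3 a
  | 4 => c4 a | 5 => c5 a | 6 => c6 a | _ => c7 a
  end.

Definition ofFun (f : nat -> R) : Cl12 :=
  mkCl12 (f 0%nat) (f 1%nat) (f 2%nat) (f 3%nat) (f 4%nat) (f 5%nat) (f 6%nat) (f 7%nat).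

Definition bitn (t k : nat) : nat := if Nat.testbit t k then 1%nat else 0%nat.

(* e_s * e_t = basis_sign s t * e_(s xor t):
   one factor (-1) per transposition needed to sort the generators
   (pairs (i in s, j in t) with i > j), and one factor i_m^2 per common
   generator (i1^2 = 1, i2^2 = i3^2 = -1). *)
Definition basis_sign (s t : nat) : R :=
  let swaps := (bitn s 1 * bitn t 0 + bitn s 2 * bitn t 0 + bitn s 2 * bitn t 1)%nat in
  let negsq := (bitn s 1 * bitn t 1 + bitn s 2 * bitn t 2)%nat in
  if Nat.even (swaps + negsq) then 1 else -1.

Definition clmul (a b : Cl12) : Cl12 :=
  ofFun (fun k =>
    fold_right Rplus 0
      (map (fun i => basis_sign i (Nat.lxor i k) * coef a i * coef b (Nat.lxor i k))
           (seq 0 8))).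

Definition clprime (a : Cl12) : Cl12 :=
  mkCl12 (c0 a) (c1 a) (- c2 a) (c3 a) (- c4 a) (c5 a) (- c6 a) (- c7 a).

From Stdlib Require Import Reals Lra.
Open Scope R_scope.

(* Uniqueness is the classical Moore-Penrose argument; it only uses
   associativity and the fact that ' reverses products.  For existence, let
   ā be the Clifford conjugate of a (reversion composed with the grade
   involution).  Then a ā = ā a = p + q e7 lies in the centre span{1, e7},
   where e7^2 = -1.  If p^2 + q^2 <> 0, then a is invertible with inverse
   ā (p + q e7)^-1, and x = a^-1.  If a ā = 0, then a a' a = 2|a|^2 a, where
   |a|^2 is the sum of the squared coordinates, and x = a' / (2|a|^2). *)

Section MoorePenrose.

Context {T : Type}.
Variables (mul : T -> T -> T) (star : T -> T).
Hypothesis mul_assoc : forall a b c, mul (mul a b) c = mul a (mul b c).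
Hypothesis star_mul : forall a b, star (mul a b) = mul (star b) (star a).
Hypothesis star_involutive : forall a, star (star a) = a.

Definition moore_penrose_inverse (a x : T) : Prop :=
  mul (mul a x) a = a /\ mul (mul x a) x = x /\
  star (mul a x) = mul a x /\ star (mul x a) = mul x a.

Lemma moore_penrose_inverse_unique a x y :
  moore_penrose_inverse a x -> moore_penrose_inverse a y -> x = y.
Proof.
  intros (axa & xax & ax_sym & xa_sym) (aya & yay & ay_sym & ya_sym).
  assert (star_a : star a = mul (star a) (mul (star y) (star a))).
  { rewrite <- aya at 1. rewrite !star_mul. reflexivity. }
  (* a x = (a x)' = x' a' y' a' = (a x)' (a y)' = a x a y = a y, and dually for x a. *)
  assert (ax_ay : mul a x = mul a y).
  { rewrite <- ax_sym, star_mul, star_a, <- mul_assoc, <- star_mul, <- star_mul, ax_sym, ay_sym.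
    rewrite <- mul_assoc, axa. reflexivity. }
  assert (xa_ya : mul x a = mul y a).
  { rewrite <- xa_sym, star_mul, star_a, <- (mul_assoc (star a) (star y) (star a)).
    rewrite mul_assoc, <- star_mul, <- star_mul, xa_sym, ya_sym.
    rewrite mul_assoc, <- (mul_assoc a x a), axa. reflexivity. }
  rewrite <- xax, mul_assoc, ax_ay, <- mul_assoc, xa_ya. exact yay.
Qed.

Variable one : T.
Hypothesis mul_1_l : forall a, mul one a = a.
Hypothesis mul_1_r : forall a, mul a one = a.

Lemma star_one : star one = one.
Proof.
  assert (H := star_mul (star one) one).
  rewrite mul_1_r, star_involutive, mul_1_r in H.
  symmetry. exact H.
Qed.

Lemma moore_penrose_inverse_of_unit a u :
  mul a u = one -> mul u a = one -> moore_penrose_inverse a u.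
Proof.
  intros au ua. unfold moore_penrose_inverse.
  rewrite au, ua, !mul_1_l, star_one. repeat split.
Qed.

End MoorePenrose.

(* [cbv] with the field operations kept folded is much faster than [simpl] on [clmul]. *)
Ltac cl_ring :=
  repeat match goal with x : Cl12 |- _ => destruct x end;
  cbv -[Rplus Rmult Ropp Rinv IZR]; f_equal; ring.

Definition clzero : Cl12 := mkCl12 0 0 0 0 0 0 0 0.
Definition clone : Cl12 := mkCl12 1 0 0 0 0 0 0 0.

Definition clscale (r : R) (a : Cl12) : Cl12 :=
  mkCl12 (r * c0 a) (r * c1 a) (r * c2 a) (r * c3 a)
         (r * c4 a) (r * c5 a) (r * c6 a) (r * c7 a).

Definition clsub (a b : Cl12) : Cl12 :=
  mkCl12 (c0 a - c0 b) (c1 a - c1 b) (c2 a - c2 b) (c3 a - c3 b)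
         (c4 a - c4 b) (c5 a - c5 b) (c6 a - c6 b) (c7 a - c7 b).

Definition clconj (a : Cl12) : Cl12 :=
  mkCl12 (c0 a) (- c1 a) (- c2 a) (- c3 a) (- c4 a) (- c5 a) (- c6 a) (c7 a).

Definition clcentral (p q : R) : Cl12 := mkCl12 p 0 0 0 0 0 0 q.

Definition clsqnorm (a : Cl12) : R :=
  c0 a * c0 a + c1 a * c1 a + c2 a * c2 a + c3 a * c3 a +
  c4 a * c4 a + c5 a * c5 a + c6 a * c6 a + c7 a * c7 a.

Lemma clmul_assoc a b c : clmul (clmul a b) c = clmul a (clmul b c).
Proof. cl_ring. Qed.

Lemma clprime_mul a b : clprime (clmul a b) = clmul (clprime b) (clprime a).
Proof. cl_ring. Qed.

Lemma clprime_involutive a : clprime (clprime a) = a.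
Proof. cl_ring. Qed.

Lemma clmul_1_l a : clmul clone a = a.
Proof. cl_ring. Qed.

Lemma clmul_1_r a : clmul a clone = a.
Proof. cl_ring. Qed.

Lemma clmul_0_l a : clmul clzero a = clzero.
Proof. cl_ring. Qed.

Lemma clprime_0 : clprime clzero = clzero.
Proof. cl_ring. Qed.

Lemma clsub_0_r a : clsub a clzero = a.
Proof. cl_ring. Qed.

Lemma clmul_scale_l r a b : clmul (clscale r a) b = clscale r (clmul a b).
Proof. cl_ring. Qed.

Lemma clmul_scale_r r a b : clmul a (clscale r b) = clscale r (clmul a b).
Proof. cl_ring. Qed.

Lemma clprime_scale r a : clprime (clscale r a) = clscale r (clprime a).
Proof. cl_ring. Qed.

Lemma clscale_scale r s a : clscale r (clscale s a) = clscale (r * s) a.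
Proof. cl_ring. Qed.

Lemma clscale_1 a : clscale 1 a = a.
Proof. cl_ring. Qed.

Lemma clsqnorm_prime a : clsqnorm (clprime a) = clsqnorm a.
Proof. destruct a; unfold clsqnorm; simpl; ring. Qed.

Lemma clsqnorm_eq_0 a : clsqnorm a = 0 -> a = clzero.
Proof. destruct a; unfold clsqnorm; simpl; intro H; unfold clzero; f_equal; nra. Qed.

Lemma clmul_conj_central a : exists p q, clmul a (clconj a) = clcentral p q.
Proof.
  exists (c0 (clmul a (clconj a))), (c7 (clmul a (clconj a))).
  cl_ring.
Qed.

Lemma clmul_conj_comm a : clmul (clconj a) a = clmul a (clconj a).
Proof. cl_ring. Qed.

Lemma clprime_mul_conj a :
  clmul (clprime a) (clconj (clprime a)) = clprime (clmul a (clconj a)).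
Proof. cl_ring. Qed.

Lemma clcentral_comm p q a : clmul (clcentral p q) a = clmul a (clcentral p q).
Proof. cl_ring. Qed.

Lemma clcentral_inv p q : p * p + q * q <> 0 ->
  clmul (clcentral p q)
        (clcentral (p / (p * p + q * q)) (- q / (p * p + q * q))) = clone.
Proof. intro H. cbv -[Rplus Rmult Ropp Rinv IZR]. f_equal; field; exact H. Qed.

Lemma clmul_prime_mul a :
  clmul (clmul a (clprime a)) a =
  clsub (clscale (2 * clsqnorm a) a) (clmul (clmul a (clconj a)) (clconj (clprime a))).
Proof. cl_ring. Qed.

Lemma clmul_prime_mul_null a : clmul a (clconj a) = clzero ->
  clmul (clmul a (clprime a)) a = clscale (2 * clsqnorm a) a.
Proof. intro H. rewrite clmul_prime_mul, H, clmul_0_l, clsub_0_r. reflexivity. Qed.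

Lemma moore_penrose_inverse_invertible_norm a p q :
  clmul a (clconj a) = clcentral p q -> p * p + q * q <> 0 ->
  moore_penrose_inverse clmul clprime a
    (clmul (clconj a) (clcentral (p / (p * p + q * q)) (- q / (p * p + q * q)))).
Proof.
  intros Hpq Hnz.
  apply (moore_penrose_inverse_of_unit clmul clprime clprime_mul clprime_involutive
           clone clmul_1_l clmul_1_r).
  - rewrite <- clmul_assoc, Hpq. apply clcentral_inv. exact Hnz.
  - rewrite clmul_assoc, clcentral_comm, <- clmul_assoc, clmul_conj_comm, Hpq.
    apply clcentral_inv. exact Hnz.
Qed.

(* For a = 0 the candidate is 0 whatever the junk value of / 0. *)
Lemma moore_penrose_inverse_null_norm a : clmul a (clconj a) = clzero ->
  moore_penrose_inverse clmul clprime a (clscale (/ (2 * clsqnorm a)) (clprime a)).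
Proof.
  intro Hnull.
  destruct (Req_dec (clsqnorm a) 0) as [Hzero | Hnz].
  { apply clsqnorm_eq_0 in Hzero. subst a.
    unfold moore_penrose_inverse. repeat split; cl_ring. }
  set (k := / (2 * clsqnorm a)).
  assert (Hk : k * (2 * clsqnorm a) = 1) by (unfold k; field; exact Hnz).
  assert (aa'a := clmul_prime_mul_null a Hnull).
  assert (a'aa' : clmul (clmul (clprime a) a) (clprime a) = clscale (2 * clsqnorm a) (clprime a)).
  { rewrite <- (clsqnorm_prime a). rewrite <- (clprime_involutive a) at 2.
    apply clmul_prime_mul_null. rewrite clprime_mul_conj, Hnull. exact clprime_0. }
  unfold moore_penrose_inverse.
  rewrite !clmul_scale_l, !clmul_scale_r, !clprime_scale, !clprime_mul, !clprime_involutive.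
  repeat split.
  - rewrite clmul_scale_l, aa'a, clscale_scale, Hk. apply clscale_1.
  - rewrite a'aa', !clscale_scale.
    replace (k * k * (2 * clsqnorm a)) with k by (rewrite Rmult_assoc, Hk; ring).
    reflexivity.
Qed.

Theorem lemma3p1 (a : Cl12) :
  exists! x : Cl12,
    clmul (clmul a x) a = a /\
    clmul (clmul x a) x = x /\
    clprime (clmul a x) = clmul a x /\
    clprime (clmul x a) = clmul x a.
Proof.
  assert (exists x, moore_penrose_inverse clmul clprime a x) as [x Hx].
  { destruct (clmul_conj_central a) as (p & q & Hpq).
    destruct (Req_dec (p * p + q * q) 0) as [Hnull | Hnz].
    - assert (p = 0 /\ q = 0) as [-> ->] by nra.
      eexists. apply moore_penrose_inverse_null_norm. exact Hpq.
    - eexists. apply (moore_penrose_inverse_invertible_norm a p q Hpq Hnz). }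
  exists x. split; [exact Hx |].
  intros y Hy.
  exact (moore_penrose_inverse_unique clmul clprime clmul_assoc clprime_mul a x y Hx Hy).
Qed.
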